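(* In the setting below, suppose $p,q\geq5$. Then for all distinct $i,j,k\in\mathbb Z/N\mathbb Z$ we have $P_{ij}\subset P^+_{jk}$ and $Q_{ij}\subset Q^+_{jk}$.
   Context: Setting: $p,q$ distinct primes, $N=p+q$; $M=(m_{ik})_{i,k\in\mathbb Z/N\mathbb Z}$ has entries in $\mathbb Z/pq\mathbb Z$ and $(e^{2\pi i\,m_{ik}/pq})$ is a complex Hadamard matrix (unimodular entries, orthogonal rows). $L_i(k)=m_{ik}$, $L_{ij}=L_j-L_i$. For $d\mid pq$, $d(\mathbb Z/pq\mathbb Z)$ is the subgroup of multiples of $d$. For distinct $i,j$ there is a partition $\mathbb Z/N\mathbb Z=P_{ij}\sqcup Q_{ij}\sqcup R_{ij}$ and $r\in\mathbb Z/pq\mathbb Z$ with: $\#R_{ij}=2$ and $L_{ij}\equiv r$ on $R_{ij}$; $\#P_{ij}=p-1$ and $L_{ij}(P_{ij})=(r+q(\mathbb Z/pq\mathbb Z))\setminus\{r\}$; $\#Q_{ij}=q-1$ and $L_{ij}(Q_{ij})=(r+p(\mathbb Z/pq\mathbb Z))\setminus\{r\}$. This partition is unique ($R_{ij}$ is the pair of indices where $L_{ij}$ takes its unique repeated value). Put $P^+_{ij}=P_{ij}\cup R_{ij}$, $Q^+_{ij}=Q_{ij}\cup R_{ij}$. *)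

From HB Require Import structures.
From mathcomp Require Import all_boot all_order all_algebra all_field.
Set Implicit Arguments. Unset Strict Implicit. Unset Printing Implicit Defensive.
Import Order.TTheory GRing.Theory Num.Theory.
Local Open Scope ring_scope.

(* e^{2 pi i / n} in algC: n.-root(-1) is the root of -1 with minimal
   non-negative argument, i.e. e^{i pi / n}; its square is e^{2 pi i/n}. *)
Definition zeta (n : nat) : algC := (n.-root (-1)) ^+ 2.

Section Setting.
Variables p q : nat.
(* indices: Z/NZ with N = p+q, represented by 'I_(p+q);
   entries: Z/pqZ represented by 'Z_(p*q) (pq >= 6 here). *)
Definition mat := 'M['Z_(p * q)]_(p + q).

(* The matrix (e^{2 pi i m_ik / pq}) has pairwise orthogonal rows
   (its entries are automatically unimodular). *)
Definition hadamard_exp (M : mat) : Prop :=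
  forall i j : 'I_(p + q), i != j ->
    \sum_(k < p + q) zeta (p * q) ^+ (M i k : nat)
                      * (zeta (p * q) ^+ (M j k : nat))^* = 0.

Definition Ldiff (M : mat) (i j k : 'I_(p + q)) : 'Z_(p * q) := M j k - M i k.

Definition multiple_of (d : nat) (x : 'Z_(p * q)) : bool :=
  [exists y : 'Z_(p * q), x == d%:R * y].

Definition Rset (M : mat) (i j : 'I_(p + q)) : {set 'I_(p + q)} :=
  [set k | [exists k', (k' != k) && (Ldiff M i j k' == Ldiff M i j k)]].

(* P_ij: indices outside R_ij with L_ij(k) in r + q(Z/pqZ), r the value on R_ij *)
Definition Pset (M : mat) (i j : 'I_(p + q)) : {set 'I_(p + q)} :=
  [set k | (k \notin Rset M i j) &&
     [exists k0 in Rset M i j, multiple_of q (Ldiff M i j k - Ldiff M i j k0)]].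

Definition Qset (M : mat) (i j : 'I_(p + q)) : {set 'I_(p + q)} :=
  [set k | (k \notin Rset M i j) &&
     [exists k0 in Rset M i j, multiple_of p (Ldiff M i j k - Ldiff M i j k0)]].

Definition Pplus (M : mat) (i j : 'I_(p + q)) := Pset M i j :|: Rset M i j.
Definition Qplus (M : mat) (i j : 'I_(p + q)) := Qset M i j :|: Rset M i j.
End Setting.

From HB Require Import structures.
From mathcomp Require Import all_boot all_order all_algebra all_field.
Import Order.TTheory GRing.Theory Num.Theory.
From mathcomp Require Import ring.

Set Implicit Arguments. Unset Strict Implicit. Unset Printing Implicit Defensive.

(* A difference L_ij of two rows is a vanishing sum of p + q powers of a
   primitive pq-th root of unity.  Galois conjugation kills every term of its
   discrete Fourier expansion at exponents prime to pq, which leaves the count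
   pq c(v) + (p + q) = q X(v) + p Y(v) between the multiplicities of v modulo
   pq, q and p; solving it gives the partition P, Q, R of the setting.
   Now L_ij = L_ik - L_jk.  Two points of P_ij at which only L_ik, only L_jk,
   or both leave their class modulo q would give a repeated non-r value of
   L_ik, L_jk or L_ij respectively, so among the at least four points of P_ij
   one lies in P+_ik and P+_jk.  Hence r_ij = r_ik - r_jk modulo q, and on
   P_ij the condition "L_ik is in r_ik + qZ" is equivalent to "L_jk is in
   r_jk + qZ".  If both failed at some t, the same argument for
   L_ik = L_ij + L_jk with p and q exchanged would put L_ij(t) in r_ij + pZ as
   well, i.e. L_ij(t) = r_ij, which is impossible on P_ij. *)

Lemma sum_card_fibers (I : finType) (f : I -> nat) m : (forall t, f t < m) ->
  \sum_(v < m) #|[set t | f t == v]| = #|I|.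
Proof.
move=> f_lt; rewrite -sum1_card (partition_big (fun t => Ordinal (f_lt t)) xpredT) //=.
apply: eq_bigr => v _; rewrite -sum1_card; apply: eq_bigl => t.
by rewrite inE -val_eqE.
Qed.

Lemma sum_congr1_unique p q (X : nat -> nat) : 0 < p ->
    (forall v, v < q -> X v = 1 %[mod p] /\ 0 < X v) ->
    \sum_(v < q) X v = p + q ->
  exists2 v0, v0 < q & X v0 = p.+1 /\ forall v, v < q -> v != v0 -> X v = 1.
Proof.
move=> p_gt0 X_congr1 sumX; pose k v := (X v).-1 %/ p.
have X_k v : v < q -> X v = (k v * p).+1.
  case/X_congr1=> X1 X_gt0; rewrite divnK; first by rewrite prednK.
  by rewrite /dvdn -(mod0n p) -(eqn_modDl 1) add1n prednK // addn0 X1.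
have /sum_nat_eq1[v0 [_ kv0 k_other]] : \sum_(v < q) k v == 1.
  have : \sum_(v < q) X v = q + p * \sum_(v < q) k v.
    rewrite big_distrr -[X in X + _]card_ord -sum1_card -big_split /=.
    by apply: eq_bigr => v _; rewrite X_k // mulnC.
  by rewrite sumX addnC => /eqP; rewrite eqn_add2l -{1}[p]muln1 eqn_pmul2l // eq_sym.
exists v0 => //; split => [|v v_lt v_neq]; first by rewrite X_k // kv0 mul1n.
by rewrite X_k // (k_other (Ordinal v_lt)).
Qed.

Lemma count_eq_congr1 a b c Z W : coprime a b -> 1 < a ->
  a * b * c + (a + b) = b * Z + a * W -> Z = 1 %[mod a] /\ 0 < Z.
Proof.
move=> co_ab a_gt1 count_eq.
have bZ : b * Z = b %[mod a].
  move/(congr1 (modn^~ a)): count_eq => /=.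
  rewrite -mulnA addnA -mulnSr [a * _]mulnC modnMDl [in RHS]addnC [a * W]mulnC.
  by rewrite modnMDl => ->.
have Z_gt0 : 0 < Z.
  rewrite lt0n; apply: contraTneq a_gt1 => Z0; move: bZ co_ab.
  by rewrite Z0 muln0 mod0n /coprime => /esym/eqP/gcdn_idPl -> /eqP ->.
split=> //; apply/eqP; rewrite eqn_mod_dvd // -(Gauss_dvdr _ co_ab) mulnBr muln1.
by rewrite -eqn_mod_dvd ?bZ // leq_pmulr.
Qed.

Lemma dvdn_add_subn d n a v : (d %| n) -> (v <= n) ->
  (d %| a + (n - v)) = (a == v %[mod d]).
Proof.
move=> d_n v_le_n; rewrite /dvdn -(mod0n d) -(eqn_modDr v) add0n -addnA subnK //.
by rewrite -[n](divnK d_n) addnC modnMDl.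
Qed.

Section CountingPQ.
Variables (I : finType) (e : I -> nat) (p q : nat).
Hypotheses (p_prime : prime p) (q_prime : prime q) (pq_neq : p != q).
Hypotheses (card_I : #|I| = p + q) (e_lt : forall t, e t < p * q).
Local Notation cnt v := #|[set t | e t == v]|.
Local Notation cnt_mod d v := #|[set t | e t == v %[mod d]]|.
Hypothesis count_eq : forall v, v < p * q ->
  p * q * cnt v + #|I| = q * cnt_mod q v + p * cnt_mod p v.

Lemma cnt_mod_mod d v : cnt_mod d (v %% d) = cnt_mod d v.
Proof. by apply: eq_card => t; rewrite !inE modn_mod. Qed.

Lemma cnt_mod_split d v :
  cnt_mod d v = cnt v + #|[set t | (e t != v) && (e t == v %[mod d])]|.
Proof.
rewrite -(cardsID [set t | e t == v]); congr (_ + _); apply: eq_card => t.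
  by rewrite !inE andb_idl // => /eqP->.
by rewrite !inE andbC.
Qed.

Lemma sum_cnt_mod d : 0 < d -> \sum_(v < d) cnt_mod d v = #|I|.
Proof.
move=> d_gt0; rewrite -(@sum_card_fibers _ (fun t => e t %% d) d) => [|t].
  by apply: eq_bigr => v _; rewrite (modn_small (ltn_ord v)).
by rewrite ltn_pmod.
Qed.

Lemma cnt_mod_classes a b : prime a -> prime b -> a != b -> #|I| = a + b ->
  (forall v, v < a * b -> a * b * cnt v + #|I| = b * cnt_mod b v + a * cnt_mod a v) ->
  exists2 v0, v0 < b & cnt_mod b v0 = a.+1 /\
                     forall v, v %% b != v0 -> cnt_mod b v = 1.
Proof.
move=> a_prime b_prime ab_neq card_ab ab_count.
have co_ab : coprime a b by rewrite prime_coprime // dvdn_prime2.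
have congr1_b v : v < b -> cnt_mod b v = 1 %[mod a] /\ 0 < cnt_mod b v.
  move=> v_lt; have v_lt_ab : v < a * b by rewrite (leq_trans v_lt) // leq_pmull // prime_gt0.
  have := ab_count v v_lt_ab; rewrite card_ab; exact: count_eq_congr1 co_ab (prime_gt1 a_prime).
have [v0 v0_lt [cnt_v0 cnt_other]] := sum_congr1_unique (prime_gt0 a_prime) congr1_b
  (etrans (sum_cnt_mod (prime_gt0 b_prime)) card_ab).
exists v0 => //; split=> // v v_neq; rewrite -cnt_mod_mod cnt_other //.
by rewrite ltn_pmod ?prime_gt0.
Qed.

Lemma pq_class_counts : exists2 r, r < p * q &
  [/\ cnt_mod q r = p.+1, cnt_mod p r = q.+1,
      forall v, v %% q != r %% q -> cnt_mod q v = 1 &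
      forall v, v %% p != r %% p -> cnt_mod p v = 1].
Proof.
have [v0 v0_lt [cnt_v0 cnt_q1]] : exists2 v0, v0 < q & cnt_mod q v0 = p.+1 /\
    forall v, v %% q != v0 -> cnt_mod q v = 1.
  exact: cnt_mod_classes.
have [w0 w0_lt [cnt_w0 cnt_p1]] : exists2 w0, w0 < p & cnt_mod p w0 = q.+1 /\
    forall v, v %% p != w0 -> cnt_mod p v = 1.
  apply: cnt_mod_classes; rewrite 1?eq_sym ?card_I 1?addnC // => v v_lt.
  by rewrite [q * p]mulnC [q + p]addnC -card_I count_eq 1?addnC // mulnC.
have co_qp : coprime q p by rewrite prime_coprime // dvdn_prime2 // eq_sym.
pose r := chinese q p v0 w0 %% (p * q).
have r_q : r %% q = v0.
  by rewrite modn_dvdm ?dvdn_mull // (chinese_modl co_qp) (modn_small v0_lt).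
have r_p : r %% p = w0.
  by rewrite modn_dvdm ?dvdn_mulr // (chinese_modr co_qp) (modn_small w0_lt).
exists r; first by rewrite ltn_pmod // muln_gt0 !prime_gt0.
split=> [||v|v]; [rewrite -cnt_mod_mod r_q | rewrite -cnt_mod_mod r_p | |] => //.
- by rewrite r_q; apply: cnt_q1.
- by rewrite r_p; apply: cnt_p1.
Qed.

Lemma pq_count_profile : exists2 r, r < p * q & [/\
    forall t, (e t == r %[mod p]) || (e t == r %[mod q]),
    forall t t', t != t' -> e t = e t' -> e t = r,
    exists t1 t2, [/\ t1 != t2, e t1 = r & e t2 = r],
    #|[set t | (e t != r) && (e t == r %[mod q])]| = p.-1 &
    #|[set t | (e t != r) && (e t == r %[mod p])]| = q.-1].
Proof.
have [r r_lt [cnt_qr cnt_pr cnt_q1 cnt_p1]] := pq_class_counts.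
have pq_gt0 : 0 < p * q by rewrite muln_gt0 !prime_gt0.
have cnt_classes v : v < p * q -> cnt v = (v %% q == r %% q) + (v %% p == r %% p).
  move=> v_lt; apply/eqP; rewrite -(eqn_pmul2l pq_gt0) -(eqn_add2r #|I|) count_eq //.
  rewrite card_I; have [vq|vq] := eqVneq (v %% q) (r %% q);
    have [vp|vp] := eqVneq (v %% p) (r %% p);
    rewrite ?vq ?vp ?cnt_qr ?cnt_pr ?cnt_q1 ?cnt_p1 //=; apply/eqP; ring.
have cnt_r : cnt r = 2 by rewrite cnt_classes // !eqxx.
exists r => //; split.
- move=> t; have : 0 < cnt (e t) by apply/card_gt0P; exists t; rewrite inE.
  by rewrite cnt_classes //; case: eqP; case: eqP.
- move=> t t' tt' e_tt'.
  have : 1 < cnt (e t) by apply/card_gt1P; exists t, t'; rewrite !inE e_tt' eqxx.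
  rewrite cnt_classes //; case: eqP => // t_q; case: eqP => // t_p _.
  apply/eqP; rewrite -(modn_small (e_lt t)) -(modn_small r_lt).
  by rewrite chinese_remainder ?t_q ?t_p ?eqxx // prime_coprime // dvdn_prime2.
- have /card_gt1P[t1 [t2 [/[!inE] /eqP e1 /eqP e2 t12]]] : 1 < cnt r by rewrite cnt_r.
  by exists t1, t2.
- by move: cnt_qr; rewrite cnt_mod_split cnt_r add2n => -[<-].
- by move: cnt_pr; rewrite cnt_mod_split cnt_r add2n => -[<-].
Qed.

End CountingPQ.

Section RootSums.
Local Open Scope ring_scope.
Variables (R : idomainType) (I : finType) (e : I -> nat).

Lemma sum_expr_root1 (x : R) m : x ^+ m = 1 ->
  \sum_(i < m) x ^+ i = if x == 1 then m%:R else 0.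
Proof.
case: eqP => [->|/eqP x_neq1] xm1.
  by under eq_bigr do rewrite expr1n; rewrite sumr_const card_ord.
have := subrX1 x m; rewrite xm1 subrr => /esym/eqP.
by rewrite mulf_eq0 subr_eq0 (negbTE x_neq1) => /eqP.
Qed.

Lemma sum_prim_root_count (z : R) d u : d.-primitive_root z ->
  \sum_(s < d) \sum_t z ^+ (s * (e t + u)) = d%:R * #|[set t | (d %| e t + u)%N]|%:R.
Proof.
move=> zd; rewrite exchange_big /= -sum1_card [in RHS]big_mkcond natr_sum mulr_sumr.
apply: eq_bigr => t _; under eq_bigr => s _ do rewrite mulnC exprM.
rewrite sum_expr_root1; last by rewrite -exprM mulnC exprM (prim_expr_order zd) expr1n.
by rewrite -(prim_order_dvd zd) inE; case: ifP; rewrite ?mulr1 ?mulr0.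
Qed.

End RootSums.

Section VanishingRootSums.
Local Open Scope ring_scope.
Variables (I : finType) (e : I -> nat).

(* The minimal polynomial of z over Q is the d-th cyclotomic polynomial; it
   divides \sum_t 'X^(e t) and has z ^+ s among its roots. *)
Lemma vanishing_sum_exprM (z : algC) d s : d.-primitive_root z ->
  coprime s d -> \sum_t z ^+ e t = 0 -> \sum_t z ^+ (s * e t) = 0.
Proof.
move=> zd co_sd sum0.
pose f : {poly rat} := \sum_t 'X^(e t).
have f_alg : map_poly ratr f = \sum_t 'X^(e t) :> {poly algC}.
  by rewrite rmorph_sum; apply: eq_bigr => t _; rewrite rmorphXn /= map_polyX.
have [p0 [Dp0 _] dvP] := minCpolyP z.
have p0_f : (p0 %| f)%R.
  rewrite -dvP f_alg /root horner_sum; under eq_bigr do rewrite hornerXn.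
  by rewrite sum0.
have p0_zs : root (map_poly ratr p0) (z ^+ s).
  by rewrite -Dp0 (minCpoly_cyclotomic zd) (root_cyclotomic zd) prim_root_exp_coprime.
have := root_dvdp (_ : map_poly ratr p0 %| map_poly ratr f) p0_zs.
rewrite dvdp_map f_alg /root horner_sum => /(_ p0_f) /eqP {2}<-.
by apply: eq_bigr => t _; rewrite hornerXn -exprM.
Qed.

Lemma vanishing_sum_prime_dvd (z : algC) l : prime l -> l.-primitive_root z ->
  \sum_t z ^+ e t = 0 -> (l %| #|I|)%N.
Proof.
case: l => [//|l] l_prime zl sum0.
have := sum_prim_root_count e 0 zl; rewrite big_ord_recl /=.
under eq_bigr do rewrite mul0n expr0; rewrite sumr_const.
rewrite big1 ?addr0 => [/eqP|s _]; last first.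
  have co_sl : coprime (bump 0 s) l.+1.
    by rewrite coprime_sym prime_coprime // gtnNdvd // ltnS ltn_ord.
  by rewrite -[RHS](vanishing_sum_exprM zl co_sl sum0); apply: eq_bigr => t _; rewrite addn0.
by rewrite -natrM eqr_nat => /eqP ->; apply: dvdn_mulr.
Qed.

End VanishingRootSums.

Section SumsOverZpq.
Local Open Scope ring_scope.
Variable V : zmodType.

Lemma sum_multiples (F : nat -> V) p m : (0 < p)%N ->
  \sum_(s < p * m) (if (p %| s)%N then F s else 0) = \sum_(s < m) F (p * s)%N.
Proof.
move=> p_gt0; rewrite -(big_mkord xpredT (fun s => F (p * s)%N)).
rewrite -(big_mkord xpredT (fun s => if (p %| s)%N then F s else 0)).
elim: m => [|m IHm].
  by rewrite muln0 !big_geq.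
rewrite big_nat_recr //= -IHm mulnS addnC (big_cat_nat _ (leq_addr p (p * m))) //=.
congr (_ + _); rewrite (big_addn 0 _ (p * m)) addKn big_ltn //= add0n dvdn_mulr //.
rewrite big1_seq ?addr0 // => s /andP[_]; rewrite mem_index_iota => /andP[s_gt0 s_lt_p].
by rewrite (dvdn_addl _ (dvdn_mulr _ (dvdnn p))) (gtnNdvd s_gt0 s_lt_p).
Qed.

Lemma sum_nonunits_pq (G : nat -> V) p q : prime p -> prime q -> p != q ->
  (forall s, (s < p * q)%N -> coprime s (p * q) -> G s = 0) ->
  \sum_(s < p * q) G s = \sum_(s < q) G (p * s)%N + \sum_(s < p) G (q * s)%N - G 0%N.
Proof.
move=> p_prime q_prime pq_neq G_units.
have co_pq : coprime p q by rewrite prime_coprime // dvdn_prime2.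
have pq_gt0 : (0 < p * q)%N by rewrite muln_gt0 !prime_gt0.
rewrite -(sum_multiples G q (prime_gt0 p_prime)) -(sum_multiples G p (prime_gt0 q_prime)).
rewrite [(q * p)%N]mulnC.
have -> : G 0%N = \sum_(s < p * q) (if s == 0%N :> nat then G s else 0).
  by rewrite -big_mkcond (big_pred1 (Ordinal pq_gt0)).
rewrite -big_split -sumrB; apply: eq_bigr => s _.
have [p_s|p_s] := boolP (p %| s)%N; have [q_s|q_s] := boolP (q %| s)%N.
- have s0 : s == 0 :> nat.
    have : (p * q %| s)%N by rewrite Gauss_dvd ?p_s ?q_s.
    by case: (posnP s) => [->//|/dvdn_leq le /le]; rewrite leqNgt ltn_ord.
  by rewrite s0 addrK.
- have -> : (s == 0 :> nat) = false by apply: contraNF q_s => /eqP ->.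
  by rewrite /= subr0 addr0.
- have -> : (s == 0 :> nat) = false by apply: contraNF p_s => /eqP ->.
  by rewrite /= subr0 add0r.
- have -> : (s == 0 :> nat) = false by apply: contraNF p_s => /eqP ->.
  rewrite /= subr0 addr0 G_units //.
  by rewrite coprimeMr !(coprime_sym s) !prime_coprime // p_s q_s.
Qed.

End SumsOverZpq.

Section VanishingSumPQ.
Local Open Scope ring_scope.
Variables (I : finType) (e : I -> nat) (p q : nat) (z : algC).
Hypotheses (p_prime : prime p) (q_prime : prime q) (pq_neq : p != q).
Hypotheses (z_prim : (p * q).-primitive_root z) (e_lt : forall t, (e t < p * q)%N).
Hypothesis sum0 : \sum_t z ^+ e t = 0.

Lemma vanishing_sum_count_pq v : (v < p * q)%N ->
  (p * q * #|[set t | e t == v]| + #|I| =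
   q * #|[set t | e t == v %[mod q]]| + p * #|[set t | e t == v %[mod p]]|)%N.
Proof.
move=> v_lt; pose G s := \sum_t z ^+ (s * (e t + (p * q - v))).
have count d k : (k * d = p * q)%N -> d.-primitive_root (z ^+ k) ->
    \sum_(s < d) G (k * s)%N = d%:R * #|[set t | e t == v %[mod d]]|%:R.
  move=> kd zd.
  have -> : [set t | e t == v %[mod d]] = [set t | (d %| e t + (p * q - v))%N].
    by apply/setP => t; rewrite !inE dvdn_add_subn ?(ltnW v_lt) // -kd dvdn_mull.
  rewrite -(sum_prim_root_count e (p * q - v) zd).
  by apply: eq_bigr => s _; rewrite /G; apply: eq_bigr => t _; rewrite -exprM mulnA.
have G_units s : (s < p * q)%N -> coprime s (p * q) -> G s = 0.
  move=> _ co_sn; rewrite /G; under eq_bigr do rewrite mulnDr exprD.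
  by rewrite -mulr_suml (vanishing_sum_exprM z_prim co_sn sum0) mul0r.
have prim_exp k d : (k * d = p * q)%N -> d.-primitive_root (z ^+ k).
  move=> kd; have : (0 < k * d)%N by rewrite kd muln_gt0 !prime_gt0.
  rewrite muln_gt0 => /andP[k_gt0 _]; have := exp_prim_root z_prim k.
  by rewrite -kd (gcdn_idPl (dvdn_mulr _ (dvdnn k))) mulKn.
have Gn : \sum_(s < p * q) G s = (p * q)%:R * #|[set t | e t == v]|%:R.
  have := count (p * q)%N 1 (mul1n _) (prim_exp 1 _ (mul1n _)).
  have -> : [set t | e t == v %[mod p * q]] = [set t | e t == v].
    by apply/setP => t; rewrite !inE !modn_small.
  by move=> <-; apply: eq_bigr => s _; rewrite mul1n.
have G0 : G 0%N = #|I|%:R.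
  by rewrite /G; under eq_bigr do rewrite mul0n expr0; rewrite sumr_const.
have := sum_nonunits_pq p_prime q_prime pq_neq G_units.
rewrite Gn G0 (count q p erefl (prim_exp p q erefl)).
rewrite (count p q (mulnC q p) (prim_exp q p (mulnC q p))) => sum_eq.
by apply/eqP; rewrite -(eqr_nat algC) natrD natrM sum_eq subrK natrD !natrM.
Qed.

End VanishingSumPQ.

Section CongruenceModuloSubgroup.
Local Open Scope ring_scope.
Variables (V : zmodType) (S : pred V).
Hypotheses (S0 : S 0) (SB : forall a b, S a -> S b -> S (a - b)).

Definition cong a b := S (a - b).

Lemma congN a : S a -> S (- a).
Proof. by move=> Sa; rewrite -sub0r SB. Qed.

Lemma cong_refl a : cong a a.
Proof. by rewrite /cong subrr. Qed.

Lemma cong_sym a b : cong a b -> cong b a.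
Proof. by move/congN; rewrite /cong opprB. Qed.

Lemma congB a b c d : cong a b -> cong c d -> cong (a - c) (b - d).
Proof.
move=> ab cd; rewrite /cong.
suff -> : a - c - (b - d) = a - b - (c - d) by apply: SB.
by rewrite !opprB addrACA [RHS]addrACA [- b + _]addrC.
Qed.

Lemma cong_trans a b c : cong a b -> cong b c -> cong a c.
Proof. by move=> ab /cong_sym cb; have := SB ab cb; rewrite /cong opprB addrA subrK. Qed.

Lemma cong_transr a b c : cong a c -> cong b c -> cong a b.
Proof. by move=> ac /cong_sym; apply: cong_trans. Qed.

Lemma cong_opp a b : cong (- a) (- b) = cong a b.
Proof. by rewrite /cong -opprD; apply/idP/idP => /congN //; rewrite opprK. Qed.

Lemma congD a b c d : cong a b -> cong c d -> cong (a + c) (b + d).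
Proof. by move=> ab cd; rewrite -[c]opprK -[d]opprK; apply: congB ab _; rewrite cong_opp. Qed.

End CongruenceModuloSubgroup.

Definition part (V : zmodType) (I : finType) (S : pred V) (g : I -> V) (r : V) :=
  [set t | (g t != r) && cong S (g t) r].

(* With A = pZ and B = qZ, the sets part B g r, part A g r and [g = r] are
   the P, Q and R of the setting. *)
Record profile (V : zmodType) (I : finType) (A B : pred V) (g : I -> V) (r : V)
    : Prop := Profile {
  profile_cover : forall t, cong A (g t) r || cong B (g t) r;
  profile_inj : forall t t', t != t' -> g t = g t' -> g t = r;
  profile_double : exists t1 t2, [/\ t1 != t2, g t1 = r & g t2 = r];
  profile_partB : 3 < #|part B g r|;
  profile_partA : 3 < #|part A g r| }.

Lemma profile_swap (V : zmodType) (I : finType) (A B : pred V) (g : I -> V) r :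
  profile A B g r -> profile B A g r.
Proof. by case=> cover *; split=> // t; rewrite orbC. Qed.

Section Profiles.
Local Open Scope ring_scope.
Variables (V : zmodType) (I : finType) (A B : pred V).
Hypotheses (A0 : A 0) (AB : forall a b, A a -> A b -> A (a - b)).
Hypotheses (B0 : B 0) (BB : forall a b, B a -> B b -> B (a - b)).
Hypothesis AB_eq0 : forall a, A a -> B a -> a = 0.

Lemma cong_eq a b : cong A a b -> cong B a b -> a = b.
Proof. by move=> /AB_eq0 h /h /eqP; rewrite subr_eq0 => /eqP. Qed.

Lemma profile_opp (g : I -> V) r : profile A B g r -> profile A B (fun t => - g t) (- r).
Proof.
case=> cover inj [t1 [t2 [t12 g1 g2]]] szB szA.
have partN (S : pred V) : S 0 -> (forall a b, S a -> S b -> S (a - b)) ->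
    part S (fun t => - g t) (- r) = part S g r.
  by move=> S0 SB; apply/setP => t; rewrite !inE eqr_opp cong_opp.
split; rewrite ?partN //.
- by move=> t; rewrite !cong_opp.
- by move=> t t' tt' /oppr_inj e; rewrite (inj t t').
- by exists t1, t2; rewrite g1 g2.
Qed.

Lemma profile_notB (g : I -> V) r t : profile A B g r -> ~~ cong B (g t) r ->
  g t != r /\ cong A (g t) r.
Proof.
case=> cover _ _ _ _ notB; split; first by apply: contraNneq notB => ->; apply: cong_refl.
by have := cover t; rewrite (negbTE notB) orbF.
Qed.

Lemma profile_card_le1 (g : I -> V) r (E : {set I}) : profile A B g r ->
  {in E &, forall t t', cong A (g t) (g t') && cong B (g t) (g t')} ->
  {in E, forall t, g t != r} -> (#|E| <= 1)%N.
Proof.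
move=> gr congE gE; apply/card_le1_eqP => t t' tE t'E.
have /andP[/cong_eq e /e {}e] := congE t t' tE t'E.
by apply: contraNeq (gE t tE) => t't; rewrite -(profile_inj gr t't (esym e)) e.
Qed.

Section Transfer.
Variables (x y z : I -> V) (rx ry rz : V).
Hypothesis xyz : forall t, x t = y t - z t.
Hypotheses (px : profile A B x rx) (py : profile A B y ry) (pz : profile A B z rz).

Lemma profile_common_point :
  exists2 t0, t0 \in part B x rx & cong B (y t0) ry && cong B (z t0) rz.
Proof.
apply/exists_inP; apply: contraLR (profile_partB px).
rewrite negb_exists_in -leqNgt => /forall_inP nogood.
pose E1 := [set t in part B x rx | cong B (y t) ry && ~~ cong B (z t) rz].
pose E2 := [set t in part B x rx | ~~ cong B (y t) ry && cong B (z t) rz].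
pose E3 := [set t in part B x rx | ~~ cong B (y t) ry && ~~ cong B (z t) rz].
have sub : part B x rx \subset E1 :|: E2 :|: E3.
  apply/subsetP => t tP; have := nogood t tP; move: tP; rewrite !inE => -> /=.
  by case: (cong B (y t) ry); case: (cong B (z t) rz).
have zyx t : z t = y t - x t by rewrite xyz opprB addrC subrK.
have yxz t : y t = x t + z t by rewrite xyz subrK.
have E1_le1 : (#|E1| <= 1)%N.
  apply: (profile_card_le1 pz) => [t t'|t]; rewrite !in_set; last first.
    by case/and3P=> _ _ /(profile_notB pz) [].
  case/and3P=> [/andP[_ xt] yt /(profile_notB pz) [_ zt]].
  case/and3P=> [/andP[_ xt'] yt' /(profile_notB pz) [_ zt']].
  rewrite (cong_transr A0 AB zt zt') /= !zyx.
  exact: (congB BB (cong_transr B0 BB yt yt') (cong_transr B0 BB xt xt')).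
have E2_le1 : (#|E2| <= 1)%N.
  apply: (profile_card_le1 py) => [t t'|t]; rewrite !in_set; last first.
    by case/and3P=> _ /(profile_notB py) [].
  case/and3P=> [/andP[_ xt] /(profile_notB py) [_ yt] zt].
  case/and3P=> [/andP[_ xt'] /(profile_notB py) [_ yt'] zt'].
  rewrite (cong_transr A0 AB yt yt') /= !yxz.
  exact: (congD B0 BB (cong_transr B0 BB xt xt') (cong_transr B0 BB zt zt')).
have E3_le1 : (#|E3| <= 1)%N.
  apply: (profile_card_le1 px) => [t t'|t]; rewrite !in_set; last by case/and3P=> /andP[].
  case/and3P=> [/andP[_ xt] /(profile_notB py) [_ yt] /(profile_notB pz) [_ zt]].
  case/and3P=> [/andP[_ xt'] /(profile_notB py) [_ yt'] /(profile_notB pz) [_ zt']].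
  rewrite (cong_transr B0 BB xt xt') andbT !xyz.
  exact: (congB AB (cong_transr A0 AB yt yt') (cong_transr A0 AB zt zt')).
apply: leq_trans (subset_leq_card sub) _.
apply: leq_trans (leq_card_setU _ _) _; rewrite (_ : 3 = 2 + 1)%N //.
apply: leq_add E3_le1; apply: leq_trans (leq_card_setU _ _) _.
exact: leq_add E1_le1 E2_le1.
Qed.

Lemma profile_partB_transfer t : t \in part B x rx ->
  cong B (y t) ry = cong B (z t) rz.
Proof.
have [t0 /[!inE] /andP[_ xt0] /andP[yt0 zt0]] := profile_common_point.
move=> /andP[_ xt].
have yzt : cong B (y t - z t) (ry - rz).
  rewrite -xyz; apply: cong_trans B0 BB _ _ _ (cong_transr B0 BB xt xt0) _.
  by rewrite xyz; apply: (congB BB).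
apply/idP/idP => h.
  by have := congB BB h yzt; rewrite !subKr.
by have := congD B0 BB yzt h; rewrite !subrK.
Qed.

End Transfer.

End Profiles.

Section PartInclusion.
Local Open Scope ring_scope.
Variables (V : zmodType) (I : finType) (A B : pred V).
Hypotheses (A0 : A 0) (AB : forall a b, A a -> A b -> A (a - b)).
Hypotheses (B0 : B 0) (BB : forall a b, B a -> B b -> B (a - b)).
Hypothesis AB_eq0 : forall a, A a -> B a -> a = 0.

Lemma profile_partB_sub (x y z : I -> V) rx ry rz :
  (forall t, x t = y t - z t) ->
  profile A B x rx -> profile A B y ry -> profile A B z rz ->
  {in part B x rx, forall t, cong B (z t) rz}.
Proof.
move=> xyz px py pz t tP.
have := profile_partB_transfer A0 AB B0 BB AB_eq0 xyz px py pz tP.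
case zt: (cong B (z t) rz) => // /negbT/(profile_notB B0 py) [yt1 yt2].
have [_ zA] := profile_notB B0 pz (negbT zt).
have BA_eq0 a : B a -> A a -> a = 0 by move=> *; apply: AB_eq0.
have yxz u : y u = x u - (- z u) by rewrite xyz opprK subrK.
have := profile_partB_transfer B0 BB A0 AB BA_eq0 yxz (profile_swap py)
  (profile_swap px) (profile_swap (profile_opp A0 AB B0 BB pz)).
move=> /(_ t); rewrite inE yt1 yt2 cong_opp // zA => /(_ isT) xA.
move: tP; rewrite inE => /andP[xt /(cong_eq AB_eq0 xA) e].
by rewrite e eqxx in xt.
Qed.

End PartInclusion.

Section MultiplesInZpq.
Variables p q : nat.
Local Open Scope ring_scope.
Hypothesis pq_gt1 : (1 < p * q)%N.
Implicit Types (d : nat) (x y : 'Z_(p * q)).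

Lemma multiple_ofE d x : (d %| p * q)%N -> multiple_of d x = (d %| x)%N.
Proof.
move=> d_pq; apply/existsP/idP => [[y /eqP->]|d_x].
  by rewrite -[y]natr_Zp -natrM val_Zp_nat // /dvdn modn_dvdm // modnMr.
by exists (x %/ d)%:R; rewrite -natrM [(d * _)%N]mulnC divnK // natr_Zp.
Qed.

Lemma multiple_of_subE d x y : (d %| p * q)%N ->
  multiple_of d (x - y) = (x == y %[mod d])%N.
Proof.
move=> d_pq; rewrite multiple_ofE //.
have -> : val x = (((x - y)%R + y) %% (p * q))%N.
  by rewrite -[in LHS](subrK y x) /=; congr (_ %% _)%N; apply: Zp_cast.
by rewrite modn_dvdm // -{2}(add0n (val y)) eqn_modDr mod0n.
Qed.

Lemma multiple_of0 d : multiple_of d (0 : 'Z_(p * q)).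
Proof. by apply/existsP; exists 0; rewrite mulr0. Qed.

Lemma multiple_ofB d x y : multiple_of d x -> multiple_of d y ->
  multiple_of d (x - y).
Proof.
move=> /existsP[a /eqP->] /existsP[b /eqP->]; apply/existsP; exists (a - b).
by rewrite mulrBr.
Qed.

Lemma multiple_of_eq0 a b x : coprime a b -> (a * b = p * q)%N ->
  multiple_of a x -> multiple_of b x -> x = 0.
Proof.
move=> co_ab ab_pq; have a_pq : (a %| p * q)%N by rewrite -ab_pq dvdn_mulr.
have b_pq : (b %| p * q)%N by rewrite -ab_pq dvdn_mull.
rewrite (multiple_ofE _ a_pq) (multiple_ofE _ b_pq) => a_x b_x.
have x_lt : (x < p * q)%N by apply: leq_trans (ltn_ord x) _; rewrite Zp_cast.
apply/val_inj/eqP; apply: contraLR x_lt; rewrite -lt0n -leqNgt => x_gt0.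
have : (a * b %| x)%N by rewrite Gauss_dvd // a_x b_x.
by rewrite ab_pq; apply: dvdn_leq.
Qed.

Lemma multiples_part_sub a b (I : finType) (x y z : I -> 'Z_(p * q)) rx ry rz :
    coprime a b -> (a * b = p * q)%N -> (forall t, x t = y t - z t) ->
    profile (multiple_of a) (multiple_of b) x rx ->
    profile (multiple_of a) (multiple_of b) y ry ->
    profile (multiple_of a) (multiple_of b) z rz ->
  {in part (multiple_of b) x rx, forall t, cong (multiple_of b) (z t) rz}.
Proof.
move=> co_ab ab_pq; apply: profile_partB_sub; try exact: multiple_of0.
- exact: multiple_ofB.
- exact: multiple_ofB.
- by move=> u; apply: multiple_of_eq0.
Qed.

End MultiplesInZpq.

Section Zeta.
Local Open Scope ring_scope.
Variable n : nat.
Hypothesis n_gt0 : (0 < n)%N.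

Lemma zeta_expr_order : zeta n ^+ n = 1.
Proof. by rewrite /zeta exprAC rootCK // sqrrN expr1n. Qed.

Lemma zeta_mul_conj : zeta n * (zeta n)^* = 1.
Proof.
have zeta_conj_ge0 : 0 <= zeta n * (zeta n)^* by rewrite -normCK exprn_ge0.
apply/eqP; rewrite -(pexpr_eq1 n_gt0 zeta_conj_ge0) exprMn -rmorphXn.
by rewrite zeta_expr_order rmorph1 mulr1.
Qed.

Lemma zeta_expr_subZp (a b : 'Z_n) : (1 < n)%N ->
  zeta n ^+ b * (zeta n ^+ a)^* = zeta n ^+ (b - a)%R.
Proof.
move=> n_gt1; have -> : (b : nat) = (((b - a)%R + a) %% n)%N.
  by rewrite -[in LHS](subrK a b) /=; congr (_ %% _)%N; apply: Zp_cast.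
rewrite (expr_mod _ zeta_expr_order) exprD -mulrA rmorphXn -exprMn.
by rewrite zeta_mul_conj expr1n mulr1.
Qed.

End Zeta.

Lemma dvdn_pq_cases p q d : prime p -> prime q -> (d %| p * q)%N ->
  [\/ d = 1, d = p, d = q | d = p * q]%N.
Proof.
move=> p_prime /primeP[_ q_div] d_pq.
have [p_d|p_nd] := boolP (p %| d)%N.
  have dp_q : (d %/ p %| q)%N.
    by rewrite -(dvdn_pmul2l (prime_gt0 p_prime)) mulnC divnK.
  case/q_div/orP: dp_q => /eqP dp; rewrite -(divnK p_d) dp.
  - by constructor 2; rewrite mul1n.
  - by constructor 4; rewrite mulnC.
have co_dp : coprime d p by rewrite coprime_sym prime_coprime.
by move: d_pq; rewrite (Gauss_dvdr _ co_dp) => /q_div/orP[]/eqP->; [constructor 1|constructor 3].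
Qed.

Section HadamardRows.
Local Open Scope ring_scope.
Variables (p q : nat) (M : 'M['Z_(p * q)]_(p + q)).
Hypotheses (p_prime : prime p) (q_prime : prime q) (pq_neq : p != q).
Hypothesis hM : hadamard_exp M.

Let pq_gt1 : (1 < p * q)%N.
Proof. by rewrite (leq_trans (prime_gt1 p_prime)) // leq_pmulr // prime_gt0. Qed.

Lemma zeta_pq_primitive (I : finType) (e : I -> nat) : #|I| = (p + q)%N ->
  \sum_t zeta (p * q) ^+ e t = 0 -> (p * q).-primitive_root (zeta (p * q)).
Proof.
move=> card_I sum0.
have pq_gt0 : (0 < p * q)%N by rewrite muln_gt0 !prime_gt0.
have [d zeta_d d_pq] := prim_order_exists pq_gt0 (zeta_expr_order pq_gt0).
case: (dvdn_pq_cases p_prime q_prime d_pq) => d_eq; move: zeta_d; rewrite d_eq => // zeta_d.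
- move: sum0; rewrite -[zeta _]expr1 (prim_expr_order zeta_d).
  under eq_bigr do rewrite expr1n.
  rewrite sumr_const card_I => /eqP; rewrite pnatr_eq0 addn_eq0 => /andP[/eqP p0 _].
  by move: p_prime; rewrite p0.
- have := vanishing_sum_prime_dvd p_prime zeta_d sum0.
  by rewrite card_I dvdn_addr // dvdn_prime2 // (negbTE pq_neq).
- have := vanishing_sum_prime_dvd q_prime zeta_d sum0.
  by rewrite card_I dvdn_addl // dvdn_prime2 // eq_sym (negbTE pq_neq).
Qed.

Lemma sum_zeta_Ldiff i j : i != j -> \sum_k zeta (p * q) ^+ Ldiff M i j k = 0.
Proof.
rewrite eq_sym => /hM sum0; rewrite -[RHS]sum0; apply: eq_bigr => k _.
by rewrite (zeta_expr_subZp (ltnW pq_gt1)) // .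
Qed.

Lemma Ldiff_profile i j : (5 <= p)%N -> (5 <= q)%N -> i != j ->
  exists r, profile (multiple_of p) (multiple_of q) (Ldiff M i j) r.
Proof.
move=> p_ge5 q_ge5 ij; pose e t := val (Ldiff M i j t).
have e_lt t : (e t < p * q)%N by apply: leq_trans (ltn_ord _) _; rewrite Zp_cast.
have card_I : #|'I_(p + q)| = (p + q)%N by rewrite card_ord.
have zeta_prim := zeta_pq_primitive card_I (sum_zeta_Ldiff ij).
have [r r_lt [cover inj double cnt_q cnt_p]] := pq_count_profile p_prime q_prime pq_neq
  card_I e_lt (vanishing_sum_count_pq p_prime q_prime pq_neq zeta_prim e_lt (sum_zeta_Ldiff ij)).
pose R : 'Z_(p * q) := inZp r.
have val_R : val R = r by rewrite /= Zp_cast // modn_small.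
have eq_R t : (Ldiff M i j t == R) = (e t == r) by rewrite -val_R val_eqE.
have cong_R d t : (d %| p * q)%N ->
    cong (multiple_of d) (Ldiff M i j t) R = (e t == r %[mod d])%N.
  by move=> d_pq; rewrite /cong multiple_of_subE // val_R.
have part_R d : (d %| p * q)%N ->
    part (multiple_of d) (Ldiff M i j) R = [set t | (e t != r) && (e t == r %[mod d])%N].
  by move=> d_pq; apply/setP => t; rewrite !inE eq_R cong_R.
have [p_pq q_pq] := (dvdn_mulr q (dvdnn p), dvdn_mull p (dvdnn q)).
exists R; split.
- by move=> t; rewrite !cong_R.
- by move=> t t' tt' e_tt'; apply/eqP; rewrite eq_R (inj t t') ?/e ?e_tt'.
- have [t1 [t2 [t12 e1 e2]]] := double.
  by exists t1, t2; split=> //; apply/eqP; rewrite eq_R; apply/eqP.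
- by rewrite part_R // cnt_q -ltnS prednK ?prime_gt0.
- by rewrite part_R // cnt_p -ltnS prednK ?prime_gt0.
Qed.

End HadamardRows.

Section RowPartition.
Local Open Scope ring_scope.
Variables (p q : nat) (M : 'M['Z_(p * q)]_(p + q)) (i j : 'I_(p + q)) (r : 'Z_(p * q)).

Lemma Rset_profile (A B : pred 'Z_(p * q)) :
  profile A B (Ldiff M i j) r -> Rset M i j = [set k | Ldiff M i j k == r].
Proof.
case=> _ inj [k1 [k2 [k12 e1 e2]]] _ _; apply/setP => k; rewrite !inE.
apply/existsP/eqP => [[k' /andP[k'k /eqP e]]|ek]; first by rewrite -e (inj k' k).
have [->|kk1] := eqVneq k k1; first by exists k2; rewrite e1 e2 eqxx eq_sym k12.
by exists k1; rewrite e1 ek eqxx eq_sym kk1.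
Qed.

Lemma part_profile (A B S : pred 'Z_(p * q)) :
  profile A B (Ldiff M i j) r ->
  [set k | (k \notin Rset M i j) &&
     [exists k0 in Rset M i j, S (Ldiff M i j k - Ldiff M i j k0)]] =
  part S (Ldiff M i j) r.
Proof.
move=> pr; have [k1 [_ [_ e1 _]]] := profile_double pr.
apply/setP => k; rewrite (Rset_profile pr) !inE; congr (_ && _).
apply/exists_inP/idP => [[k0 /[!inE] /eqP <-]|] //.
by exists k1; rewrite ?inE e1.
Qed.

End RowPartition.

Theorem corollary6p7 (p q : nat) (hp : prime p) (hq : prime q) (hpq : p != q)
  (hp5 : 5 <= p) (hq5 : 5 <= q) (M : 'M['Z_(p * q)]_(p + q))
  (hM : hadamard_exp M) (i j k : 'I_(p + q)) :
  i != j -> j != k -> i != k ->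
  Pset M i j \subset Pplus M j k /\ Qset M i j \subset Qplus M j k.
Proof.
move=> ij jk ik.
have [rx px] := Ldiff_profile hp hq hpq hM hp5 hq5 ij.
have [ry py] := Ldiff_profile hp hq hpq hM hp5 hq5 ik.
have [rz pz] := Ldiff_profile hp hq hpq hM hp5 hq5 jk.
have xyz t : Ldiff M i j t = (Ldiff M i k t - Ldiff M j k t)%R.
  by rewrite /Ldiff opprB [in RHS]addrC addrA subrK.
have pq_gt1 : 1 < p * q by rewrite (leq_trans (prime_gt1 hp)) // leq_pmulr // prime_gt0.
have co_pq : coprime p q by rewrite prime_coprime // dvdn_prime2.
have co_qp : coprime q p by rewrite coprime_sym.
split; apply/subsetP => t.
- rewrite /Pset (part_profile _ px).
  move=> /(multiples_part_sub pq_gt1 co_pq erefl xyz px py pz) zt.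
  by rewrite /Pplus /Pset (part_profile _ pz) (Rset_profile pz) !inE zt andbT orNb.
- rewrite /Qset (part_profile _ px) => /(multiples_part_sub pq_gt1 co_qp (mulnC q p)
    xyz (profile_swap px) (profile_swap py) (profile_swap pz)) zt.
  by rewrite /Qplus /Qset (part_profile _ pz) (Rset_profile pz) !inE zt andbT orNb.
Qed.
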